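(* For every smooth closed plane curve parametrized by arc length with rotation number $n\ge1$, $4\pi^2 n\,|I_{-1}|\le I_0$.
   Context: A closed plane curve is a smooth map $\vec f:\mathbb{R}/L\mathbb{Z}\to\mathbb{R}^2$ parametrized by arc length $s$, where $L>0$ is its length. $\vec\nu$ is $\partial_s\vec f$ rotated counterclockwise by $\pi/2$, $\kappa=\partial_s^2\vec f\cdot\vec\nu$, $n=\frac1{2\pi}\int_0^L\kappa\,ds$, $A=-\frac12\int_0^L\vec f\cdot\vec\nu\,ds$, $\tilde\kappa=\kappa-\frac1L\int_0^L\kappa\,ds$, $I_0=L\int_0^L\tilde\kappa^2\,ds$, and $I_{-1}=1-\frac{4n\pi A}{L^2}$. *)

From Stdlib Require Import Reals Lra ClassicalEpsilon.
Open Scope R_scope.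

(* Total Riemann integral on [a,b]: the Riemann integral when f is Riemann
   integrable on [a,b] (its value does not depend on the integrability proof,
   RiemannInt_P5), and 0 otherwise.  All integrands below are continuous,
   hence integrable. *)
Definition Rint (f : R -> R) (a b : R) : R :=
  match excluded_middle_informative (exists pr : Riemann_integrable f a b, True) with
  | left H => RiemannInt (proj1_sig (constructive_indefinite_description _ H))
  | right _ => 0
  end.

(* d is the sequence of all derivatives of d 0: d (S k) is the derivative of
   d k everywhere.  So "exists d, d 0 = g /\ is_deriv_seq d" means g is C^oo. *)
Definition is_deriv_seq (d : nat -> R -> R) : Prop :=
  forall (k : nat) (x : R), derivable_pt_lim (d k) x (d (S k) x).

(* A smooth closed plane curve f = (d1 0, d2 0) : R/LZ -> R^2 parametrized by
   arc length, given with its derivative sequences d1, d2. *)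
Definition arclength_closed_curve (L : R) (d1 d2 : nat -> R -> R) : Prop :=
  0 < L /\ is_deriv_seq d1 /\ is_deriv_seq d2 /\
  (forall s, d1 0%nat (s + L) = d1 0%nat s /\ d2 0%nat (s + L) = d2 0%nat s) /\
  (forall s, (d1 1%nat s) ^ 2 + (d2 1%nat s) ^ 2 = 1).

Definition nu1 (d1 d2 : nat -> R -> R) (s : R) : R := - d2 1%nat s.
Definition nu2 (d1 d2 : nat -> R -> R) (s : R) : R := d1 1%nat s.

Definition kappa (d1 d2 : nat -> R -> R) (s : R) : R :=
  d1 2%nat s * nu1 d1 d2 s + d2 2%nat s * nu2 d1 d2 s.

Definition rot_number (L : R) (d1 d2 : nat -> R -> R) : R :=
  / (2 * PI) * Rint (kappa d1 d2) 0 L.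

Definition area (L : R) (d1 d2 : nat -> R -> R) : R :=
  - / 2 * Rint (fun s => d1 0%nat s * nu1 d1 d2 s + d2 0%nat s * nu2 d1 d2 s) 0 L.

Definition kappa_tilde (L : R) (d1 d2 : nat -> R -> R) (s : R) : R :=
  kappa d1 d2 s - / L * Rint (kappa d1 d2) 0 L.

Definition I0 (L : R) (d1 d2 : nat -> R -> R) : R :=
  L * Rint (fun s => (kappa_tilde L d1 d2 s) ^ 2) 0 L.

Definition Im1 (L : R) (d1 d2 : nat -> R -> R) : R :=
  1 - 4 * rot_number L d1 d2 * PI * area L d1 d2 / L ^ 2.

From Stdlib Require Import Reals Lra ClassicalEpsilon.
From Coquelicot Require Import Coquelicot.
Open Scope R_scope.

(* Let K = int kappa = 2 pi n, b = K / L, and g = f' - b J f with J the rotation by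
   pi/2.  The Frenet equation f'' = kappa nu gives g' = (kappa - b) nu, hence
   int |g'|^2 = I0 / L and int (g1' g2 - g2' g1) = K - 2 b^2 A = K I_{-1}.  Since g is
   L-periodic, Wirtinger's inequality int |g - c|^2 <= (L / 2 pi)^2 int |g'|^2 and AM-GM
   bound |int (g1' g2 - g2' g1)| by (L / 2 pi) int |g'|^2, that is K |I_{-1}| <= I0 / 2 pi.
   Wirtinger's inequality is Dirichlet's inequality on the two halves of a period, cut at
   points a and a + L/2 where g takes the same value. *)

Lemma continuous_pow_R (f : R -> R) (n : nat) x :
  continuous f x -> continuous (fun s => f s ^ n) x.
Proof.
  intros Hf; induction n as [|n IH]; simpl.
  - apply continuous_const.
  - apply (continuous_mult (K := R_AbsRing)); assumption.
Qed.

Ltac continuous_R :=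
  repeat match goal with
  | |- continuous (fun _ => ?c) _ => apply continuous_const
  | |- continuous (fun s => @?a s + @?b s) _ => apply (continuous_plus (V := R_NormedModule) a b)
  | |- continuous (fun s => @?a s - @?b s) _ => apply (continuous_minus (V := R_NormedModule) a b)
  | |- continuous (fun s => @?a s * @?b s) _ => apply (continuous_mult (K := R_AbsRing) a b)
  | |- continuous (fun s => - @?a s) _ => apply (continuous_opp (V := R_NormedModule) a)
  | |- continuous (fun s => @?a s ^ _) _ => apply continuous_pow_R
  | |- continuous (fun s => Rabs (@?a s)) _ => apply (continuous_Rabs_comp a)
  end; auto.

Lemma is_derive_continuous (f f' : R -> R) x : is_derive f x (f' x) -> continuous f x.
Proof. intros H; apply (ex_derive_continuous (V := R_NormedModule)); exists (f' x); exact H. Qed.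

Lemma ex_RInt_continuous_R (f : R -> R) a b : (forall x, continuous f x) -> ex_RInt f a b.
Proof. intros H; apply (ex_RInt_continuous (V := R_CompleteNormedModule)); auto. Qed.

Ltac ex_RInt_R := apply ex_RInt_continuous_R; intro; continuous_R.

Lemma RInt_ext_R (f g : R -> R) a b : (forall x, f x = g x) -> RInt f a b = RInt g a b.
Proof. intros H; apply RInt_ext; intros; apply H. Qed.

Lemma RInt_plus_R (f g : R -> R) a b :
  (forall x, continuous f x) -> (forall x, continuous g x) ->
  RInt (fun x => f x + g x) a b = RInt f a b + RInt g a b.
Proof. intros; apply (RInt_plus f g); apply ex_RInt_continuous_R; assumption. Qed.

Lemma RInt_minus_R (f g : R -> R) a b :
  (forall x, continuous f x) -> (forall x, continuous g x) ->
  RInt (fun x => f x - g x) a b = RInt f a b - RInt g a b.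
Proof. intros; apply (RInt_minus f g); apply ex_RInt_continuous_R; assumption. Qed.

Lemma RInt_scal_R (f : R -> R) c a b :
  (forall x, continuous f x) -> RInt (fun x => c * f x) a b = c * RInt f a b.
Proof. intros; apply (RInt_scal f); apply ex_RInt_continuous_R; assumption. Qed.

Lemma RInt_Chasles_R (f : R -> R) a b c :
  (forall x, continuous f x) -> RInt f a b + RInt f b c = RInt f a c.
Proof. intros; apply (RInt_Chasles f); apply ex_RInt_continuous_R; assumption. Qed.

Lemma RInt_is_derive (F f : R -> R) a b :
  (forall x, is_derive F x (f x)) -> (forall x, continuous f x) -> RInt f a b = F b - F a.
Proof. intros HF Hf; apply is_RInt_unique, (is_RInt_derive F f); auto. Qed.

Lemma Rint_RInt (f : R -> R) a b : (forall x, continuous f x) -> Rint f a b = RInt f a b.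
Proof.
  intros H; unfold Rint.
  destruct (excluded_middle_informative _) as [Hint | Hn].
  - symmetry; apply RInt_Reals.
  - exfalso; apply Hn.
    exists (ex_RInt_Reals_0 _ _ _ (ex_RInt_continuous_R f a b H)); trivial.
Qed.

Lemma is_derive_periodic (g g' : R -> R) T :
  (forall x, is_derive g x (g' x)) -> (forall x, g (x + T) = g x) ->
  forall x, g' (x + T) = g' x.
Proof.
  intros Hg Hp x.
  assert (Hshift : is_derive (fun s => g (s + T)) x (g' (x + T))).
  { auto_derive; [exists (g' (x + T)); apply Hg |].
    rewrite Rmult_1_l; apply is_derive_unique, Hg. }
  apply (is_derive_ext _ g) in Hshift; [| intro; apply Hp].
  rewrite <- (is_derive_unique _ _ _ Hshift); apply is_derive_unique, Hg.
Qed.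

Lemma RInt_periodic_shift (f : R -> R) T a :
  (forall x, continuous f x) -> (forall x, f (x + T) = f x) ->
  RInt f a (a + T) = RInt f 0 T.
Proof.
  intros Hc Hp.
  rewrite <- (RInt_Chasles_R f a T (a + T)), <- (RInt_Chasles_R f 0 a T) by exact Hc.
  assert (Htail : RInt f T (a + T) = RInt f 0 a).
  { assert (Hlin := RInt_comp_lin f 1 T 0 a (ex_RInt_continuous_R f _ _ Hc)).
    replace (1 * 0 + T) with T in Hlin by ring.
    replace (1 * a + T) with (a + T) in Hlin by ring.
    rewrite <- Hlin; apply RInt_ext; intros x _.
    unfold scal; simpl; unfold mult; simpl. rewrite !Rmult_1_l. apply Hp. }
  rewrite Htail; apply Rplus_comm.
Qed.

Lemma Rle_of_sqr_mul_le (B C : R) :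
  0 <= C -> (forall mu, 0 < mu < 1 -> mu ^ 2 * B <= C) -> B <= C.
Proof.
  intros HC H. destruct (Rle_or_lt B C) as [| HCB]; [assumption | exfalso].
  set (r := C / B).
  assert (Hr : 0 <= r < 1).
  { unfold r; split; [apply Rdiv_le_0_compat; lra |].
    apply (Rmult_lt_reg_r B); [lra |]. field_simplify; lra. }
  assert (HCr : C = r * B) by (unfold r; field; lra).
  assert (Hmid := H ((1 + r) / 2) ltac:(lra)).
  nra.
Qed.

Lemma sin_affine_pos (al de P p x : R) :
  0 <= al -> 0 < de -> al * P + de < PI -> p <= x <= p + P -> 0 < sin (al * (x - p) + de).
Proof.
  intros Hal Hde Hpi Hx.
  assert (0 <= al * (x - p)) by (apply Rmult_le_pos; lra).
  assert (al * (x - p) <= al * P) by (apply Rmult_le_compat_l; lra).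
  apply sin_gt_0; lra.
Qed.

Lemma cot_square_identity (a s c u v : R) :
  s <> 0 -> s ^ 2 + c ^ 2 = 1 ->
  v ^ 2 - a ^ 2 * u ^ 2 - (- a ^ 2 * u ^ 2 / s ^ 2 + 2 * (a * c / s) * u * v)
  = (v - a * c / s * u) ^ 2.
Proof.
  intros Hs Hsc.
  transitivity (v ^ 2 - 2 * (a * c / s) * u * v + a ^ 2 * u ^ 2 * (1 - s ^ 2) / s ^ 2);
    [| rewrite <- Hsc]; field; assumption.
Qed.

Section Dirichlet.

Variables h h' : R -> R.
Hypothesis h_is_derive : forall x, is_derive h x (h' x).
Hypothesis h'_continuous : forall x, continuous h' x.

Let h_ex_derive x : ex_derive h x.
Proof. exists (h' x); apply h_is_derive. Qed.

Let h_continuous x : continuous h x.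
Proof. apply (is_derive_continuous h h'), h_is_derive. Qed.

Let h_Derive x : Derive (fun y => h y) x = h' x.
Proof. apply is_derive_unique, h_is_derive. Qed.

Lemma cot_weight_is_derive_continuous al p de x :
  0 < sin (al * (x - p) + de) ->
  is_derive (fun y => al * cos (al * (y - p) + de) / sin (al * (y - p) + de) * h y ^ 2) x
    (- al ^ 2 * h x ^ 2 / sin (al * (x - p) + de) ^ 2
     + 2 * (al * cos (al * (x - p) + de) / sin (al * (x - p) + de)) * h x * h' x)
  /\ continuous (fun y => - al ^ 2 * h y ^ 2 / sin (al * (y - p) + de) ^ 2
       + 2 * (al * cos (al * (y - p) + de) / sin (al * (y - p) + de)) * h y * h' y) x.
Proof.
  intros Hsin.
  assert (Hsc := sin2_cos2 (al * (x - p) + de)); unfold Rsqr in Hsc.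
  split.
  - auto_derive; change (x + - p) with (x - p); [repeat split; auto; lra |].
    rewrite h_Derive.
    set (sn := sin _) in *; set (cs := cos _) in *.
    transitivity (- al ^ 2 * h x ^ 2 * (sn * sn + cs * cs) / sn ^ 2
                  + 2 * (al * cs / sn) * h x * h' x);
      [| rewrite Hsc]; field; lra.
  - continuous_R; apply (ex_derive_continuous (V := R_NormedModule)).
    all: auto_derive; change (x + - p) with (x - p); repeat split; auto.
    all: first [lra | apply Rgt_not_eq; nra].
Qed.

(* Picone's argument: th(x) = al (x - p) + (1 - mu) pi/2 stays in (0, pi) on [p, p + P]
   because mu < 1, so W = al cot(th) h^2 is C^1 there, vanishes at both ends, and
   W' = h'^2 - al^2 h^2 - (h' - al cot(th) h)^2. *)
Lemma Dirichlet_ineq_scaled p P mu :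
  0 < P -> 0 < mu < 1 -> h p = 0 -> h (p + P) = 0 ->
  (mu * PI / P) ^ 2 * RInt (fun x => h x ^ 2) p (p + P)
  <= RInt (fun x => h' x ^ 2) p (p + P).
Proof.
  intros HP Hmu H0 H1.
  assert (Hpi := PI_RGT_0).
  set (al := mu * PI / P).
  set (de := (1 - mu) * PI / 2).
  assert (HalP : al * P = mu * PI) by (unfold al; field; lra).
  assert (Hsin : forall x, Rmin p (p + P) <= x <= Rmax p (p + P) -> 0 < sin (al * (x - p) + de)).
  { intros x Hx; rewrite Rmin_left, Rmax_right in Hx by lra.
    apply (sin_affine_pos al _ P); [unfold al; apply Rlt_le, Rdiv_lt_0_compat; nra
                                  | unfold de; nra | rewrite HalP; unfold de; nra | exact Hx]. }
  set (W := fun y => al * cos (al * (y - p) + de) / sin (al * (y - p) + de) * h y ^ 2).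
  set (W' := fun y => - al ^ 2 * h y ^ 2 / sin (al * (y - p) + de) ^ 2
               + 2 * (al * cos (al * (y - p) + de) / sin (al * (y - p) + de)) * h y * h' y).
  assert (HW : forall x, Rmin p (p + P) <= x <= Rmax p (p + P) ->
                         is_derive W x (W' x) /\ continuous W' x)
    by (intros; apply cot_weight_is_derive_continuous, Hsin; assumption).
  assert (HW'0 : RInt W' p (p + P) = 0).
  { apply is_RInt_unique.
    replace 0 with (minus (W (p + P)) (W p))
      by (unfold W, minus, plus, opp; simpl; rewrite H0, H1; ring).
    apply (is_RInt_derive W W'); intros; apply HW; assumption. }
  assert (Hle : RInt W' p (p + P) <= RInt (fun x => h' x ^ 2 - al ^ 2 * h x ^ 2) p (p + P)).
  { apply RInt_le; [lra | | ex_RInt_R |].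
    - apply (ex_RInt_continuous (V := R_CompleteNormedModule)); intros; apply HW; assumption.
    - intros x Hx.
      assert (Hsx : 0 < sin (al * (x - p) + de))
        by (apply Hsin; rewrite Rmin_left, Rmax_right; lra).
      assert (Hsc : sin (al * (x - p) + de) ^ 2 + cos (al * (x - p) + de) ^ 2 = 1)
        by (rewrite <- (sin2_cos2 (al * (x - p) + de)); unfold Rsqr; ring).
      assert (E := cot_square_identity al _ _ (h x) (h' x) (Rgt_not_eq _ _ Hsx) Hsc).
      pose proof (pow2_ge_0 (h' x - al * cos (al * (x - p) + de) / sin (al * (x - p) + de) * h x)).
      unfold W'; lra. }
  rewrite RInt_minus_R, RInt_scal_R in Hle by (intro; continuous_R).
  lra.
Qed.

Lemma Dirichlet_ineq p P :
  0 < P -> h p = 0 -> h (p + P) = 0 ->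
  RInt (fun x => h x ^ 2) p (p + P) <= (P / PI) ^ 2 * RInt (fun x => h' x ^ 2) p (p + P).
Proof.
  intros HP H0 H1.
  assert (Hpi := PI_RGT_0).
  set (B := RInt (fun x => h x ^ 2) p (p + P)).
  set (C := RInt (fun x => h' x ^ 2) p (p + P)).
  assert (HC : 0 <= C) by (apply RInt_ge_0; [lra | ex_RInt_R | intros; apply pow2_ge_0]).
  assert (Hlim : (PI / P) ^ 2 * B <= C).
  { apply Rle_of_sqr_mul_le; [exact HC |]. intros mu Hmu.
    replace (mu ^ 2 * ((PI / P) ^ 2 * B)) with ((mu * PI / P) ^ 2 * B) by (field; lra).
    apply Dirichlet_ineq_scaled; assumption. }
  replace B with ((P / PI) ^ 2 * ((PI / P) ^ 2 * B)) by (field; lra).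
  apply Rmult_le_compat_l; [apply pow2_ge_0 | exact Hlim].
Qed.

End Dirichlet.

Lemma Wirtinger_ineq (g g' : R -> R) T :
  0 < T ->
  (forall x, is_derive g x (g' x)) -> (forall x, continuous g' x) ->
  (forall x, g (x + T) = g x) ->
  exists c, RInt (fun s => (g s - c) ^ 2) 0 T
            <= (T / (2 * PI)) ^ 2 * RInt (fun s => g' s ^ 2) 0 T.
Proof.
  intros HT Hd Hc Hp.
  assert (Hpi := PI_RGT_0).
  assert (Hcg : forall x, continuous g x) by (intro x; apply (is_derive_continuous g g'), Hd).
  set (phi := fun s => g (s + T / 2) - g s).
  assert (Hphi : forall x, continuous phi x).
  { intro x; unfold phi; continuous_R.
    apply (continuous_comp (fun s => s + T / 2) g);
      [continuous_R; apply continuous_id | apply Hcg]. }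
  assert (Hanti : phi (T / 2) = - phi 0).
  { unfold phi; replace (T / 2 + T / 2) with (0 + T) by field.
    rewrite Hp, Rplus_0_l; ring. }
  destruct (IVT_gen_consistent phi 0 (T / 2) 0 Hphi) as [a [_ Ha]].
  { rewrite Hanti; destruct (Rle_or_lt 0 (phi 0)).
    - rewrite Rmin_right, Rmax_left; lra.
    - rewrite Rmin_left, Rmax_right; lra. }
  exists (g a).
  set (h := fun s => g s - g a).
  assert (Hdh : forall x, is_derive h x (g' x)).
  { intro x; unfold h; auto_derive; [exists (g' x); apply Hd |].
    replace (Derive (fun y => g y) x) with (g' x) by (symmetry; apply is_derive_unique, Hd).
    ring. }
  assert (Hhalf : h (a + T / 2) = 0) by (unfold h; unfold phi in Ha; lra).
  assert (Hfull : h (a + T / 2 + T / 2) = 0).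
  { unfold h; replace (a + T / 2 + T / 2) with (a + T) by field; rewrite Hp; ring. }
  assert (D1 := Dirichlet_ineq h g' Hdh Hc a (T / 2) ltac:(lra) ltac:(unfold h; ring) Hhalf).
  assert (D2 := Dirichlet_ineq h g' Hdh Hc (a + T / 2) (T / 2) ltac:(lra) Hhalf Hfull).
  replace (a + T / 2 + T / 2) with (a + T) in D2 by field.
  assert (Hch : forall x : R, continuous (fun y : R => h y ^ 2) x)
    by (intro; unfold h; continuous_R).
  assert (Hcg' : forall x : R, continuous (fun y : R => g' y ^ 2) x) by (intro; continuous_R).
  change (RInt (fun s => h s ^ 2) 0 T <= (T / (2 * PI)) ^ 2 * RInt (fun s => g' s ^ 2) 0 T).
  rewrite <- (RInt_periodic_shift _ T a Hch) by (intro; unfold h; rewrite Hp; reflexivity).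
  rewrite <- (RInt_periodic_shift _ T a Hcg')
    by (intro; rewrite (is_derive_periodic g g' T Hd Hp); reflexivity).
  rewrite <- (RInt_Chasles_R _ a (a + T / 2) (a + T) Hch),
          <- (RInt_Chasles_R _ a (a + T / 2) (a + T) Hcg').
  replace (T / (2 * PI)) with (T / 2 / PI) by (field; lra).
  lra.
Qed.

Lemma Rabs_cross_le (t u1 u2 a1 a2 : R) :
  0 < t ->
  Rabs (u1 * a2 - u2 * a1) <= t / 2 * (u1 ^ 2 + u2 ^ 2) + / (2 * t) * (a1 ^ 2 + a2 ^ 2).
Proof.
  intros Ht.
  set (bound := t / 2 * (u1 ^ 2 + u2 ^ 2) + / (2 * t) * (a1 ^ 2 + a2 ^ 2)).
  assert (Hsq : forall v w, 0 <= (v ^ 2 + w ^ 2) / (2 * t))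
    by (intros; apply Rdiv_le_0_compat; [nra | lra]).
  assert (Ep : bound + (u1 * a2 - u2 * a1) = ((t * u1 + a2) ^ 2 + (t * u2 - a1) ^ 2) / (2 * t))
    by (unfold bound; field; lra).
  assert (Em : bound - (u1 * a2 - u2 * a1) = ((t * u1 - a2) ^ 2 + (t * u2 + a1) ^ 2) / (2 * t))
    by (unfold bound; field; lra).
  pose proof (Hsq (t * u1 + a2) (t * u2 - a1)); pose proof (Hsq (t * u1 - a2) (t * u2 + a1)).
  apply Rabs_le; lra.
Qed.

Lemma Wirtinger_area (g1 g1' g2 g2' : R -> R) T :
  0 < T ->
  (forall x, is_derive g1 x (g1' x)) -> (forall x, continuous g1' x) ->
  (forall x, is_derive g2 x (g2' x)) -> (forall x, continuous g2' x) ->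
  (forall x, g1 (x + T) = g1 x) -> (forall x, g2 (x + T) = g2 x) ->
  Rabs (RInt (fun s => g1' s * g2 s - g2' s * g1 s) 0 T)
  <= T / (2 * PI) * RInt (fun s => g1' s ^ 2 + g2' s ^ 2) 0 T.
Proof.
  intros HT Hd1 Hc1 Hd2 Hc2 Hp1 Hp2.
  assert (Hpi := PI_RGT_0).
  set (t := T / (2 * PI)).
  assert (Ht : 0 < t) by (unfold t; apply Rdiv_lt_0_compat; lra).
  destruct (Wirtinger_ineq g1 g1' T HT Hd1 Hc1 Hp1) as [c1 W1].
  destruct (Wirtinger_ineq g2 g2' T HT Hd2 Hc2 Hp2) as [c2 W2].
  fold t in W1, W2.
  assert (Hcg1 : forall x, continuous g1 x) by (intro x; apply (is_derive_continuous g1 g1'), Hd1).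
  assert (Hcg2 : forall x, continuous g2 x) by (intro x; apply (is_derive_continuous g2 g2'), Hd2).
  assert (Hshift : RInt (fun s => g1' s * g2 s - g2' s * g1 s) 0 T
                   = RInt (fun s => g1' s * (g2 s - c2) - g2' s * (g1 s - c1)) 0 T :> R).
  { rewrite (RInt_ext_R (fun s => g1' s * (g2 s - c2) - g2' s * (g1 s - c1))
                        (fun s => (g1' s * g2 s - g2' s * g1 s) - (c2 * g1' s - c1 * g2' s)))
      by (intros; ring).
    rewrite !RInt_minus_R, !RInt_scal_R by (intro; continuous_R).
    rewrite (RInt_is_derive g1 g1'), (RInt_is_derive g2 g2') by assumption.
    rewrite <- (Rplus_0_l T), Hp1, Hp2; ring. }
  set (bound := fun s => t / 2 * (g1' s ^ 2 + g2' s ^ 2)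
                         + / (2 * t) * ((g1 s - c1) ^ 2 + (g2 s - c2) ^ 2)).
  assert (Hbound : RInt bound 0 T <= t * RInt (fun s => g1' s ^ 2 + g2' s ^ 2) 0 T).
  { unfold bound; rewrite RInt_plus_R, !RInt_scal_R, !RInt_plus_R by (intro; continuous_R).
    set (Q := RInt (fun s => g1' s ^ 2) 0 T + RInt (fun s => g2' s ^ 2) 0 T).
    assert (Hinv : 0 < / (2 * t)) by (apply Rinv_0_lt_compat; lra).
    assert (Hvar : / (2 * t) * (RInt (fun s => (g1 s - c1) ^ 2) 0 T
                                + RInt (fun s => (g2 s - c2) ^ 2) 0 T)
                   <= / (2 * t) * (t ^ 2 * Q))
      by (apply Rmult_le_compat_l; unfold Q; lra).
    replace (/ (2 * t) * (t ^ 2 * Q)) with (t / 2 * Q) in Hvar by (field; lra).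
    lra. }
  rewrite Hshift.
  apply (Rle_trans _ (RInt (fun s => Rabs (g1' s * (g2 s - c2) - g2' s * (g1 s - c1))) 0 T));
    [apply abs_RInt_le; [lra | ex_RInt_R] |].
  apply (Rle_trans _ (RInt bound 0 T)); [| exact Hbound].
  apply RInt_le; [lra | ex_RInt_R | unfold bound; ex_RInt_R |].
  intros s _; apply Rabs_cross_le, Ht.
Qed.

Lemma is_deriv_seq_is_derive (d : nat -> R -> R) :
  is_deriv_seq d -> forall k x, is_derive (d k) x (d (S k) x).
Proof. intros H k x; apply is_derive_Reals, H. Qed.

Lemma is_deriv_seq_ex_derive (d : nat -> R -> R) :
  is_deriv_seq d -> forall k x, ex_derive (d k) x.
Proof. intros H k x; exists (d (S k) x); apply is_deriv_seq_is_derive, H. Qed.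

Lemma is_deriv_seq_Derive (d : nat -> R -> R) :
  is_deriv_seq d -> forall k x, Derive (d k) x = d (S k) x.
Proof. intros H k x; apply is_derive_unique, is_deriv_seq_is_derive, H. Qed.

Lemma is_deriv_seq_periodic (d : nat -> R -> R) T :
  is_deriv_seq d -> (forall s, d 0%nat (s + T) = d 0%nat s) ->
  forall k s, d k (s + T) = d k s.
Proof.
  intros Hd H0 k; induction k as [| k IH]; [exact H0 |].
  apply (is_derive_periodic (d k)); [apply is_deriv_seq_is_derive, Hd | exact IH].
Qed.

Section ArclengthCurve.

Variables (L : R) (d1 d2 : nat -> R -> R).
Hypothesis curve : arclength_closed_curve L d1 d2.

Lemma curve_length_pos : 0 < L.
Proof. apply curve. Qed.

Let d1_deriv_seq : is_deriv_seq d1.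
Proof. apply curve. Qed.

Let d2_deriv_seq : is_deriv_seq d2.
Proof. apply curve. Qed.

Local Hint Resolve is_deriv_seq_ex_derive d1_deriv_seq d2_deriv_seq : core.

Let Derive_d1 := is_deriv_seq_Derive d1 d1_deriv_seq.
Let Derive_d2 := is_deriv_seq_Derive d2 d2_deriv_seq.

Lemma curve_periodic1 k s : d1 k (s + L) = d1 k s.
Proof. apply is_deriv_seq_periodic; [exact d1_deriv_seq | apply curve]. Qed.

Lemma curve_periodic2 k s : d2 k (s + L) = d2 k s.
Proof. apply is_deriv_seq_periodic; [exact d2_deriv_seq | apply curve]. Qed.

Lemma curve_closed1 k : d1 k L = d1 k 0.
Proof. rewrite <- (curve_periodic1 k 0), Rplus_0_l; reflexivity. Qed.

Lemma curve_closed2 k : d2 k L = d2 k 0.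
Proof. rewrite <- (curve_periodic2 k 0), Rplus_0_l; reflexivity. Qed.

Lemma curve_unit_speed s : d1 1%nat s ^ 2 + d2 1%nat s ^ 2 = 1.
Proof. apply curve. Qed.

Ltac smooth_continuous :=
  intro; apply (ex_derive_continuous (V := R_NormedModule));
  unfold kappa, nu1, nu2; auto_derive; repeat split; auto.

Lemma tangent_orthogonal s : d1 1%nat s * d1 2%nat s + d2 1%nat s * d2 2%nat s = 0.
Proof.
  assert (Hspeed : is_derive (fun s => d1 1%nat s ^ 2 + d2 1%nat s ^ 2) s
                     (2 * (d1 1%nat s * d1 2%nat s + d2 1%nat s * d2 2%nat s))).
  { auto_derive; [repeat split; auto |]. rewrite Derive_d1, Derive_d2; ring. }
  apply (is_derive_ext _ (fun _ => 1)) in Hspeed; [| apply curve_unit_speed].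
  apply is_derive_unique in Hspeed; rewrite Derive_const in Hspeed; lra.
Qed.

Lemma frenet1 s : d1 2%nat s = kappa d1 d2 s * nu1 d1 d2 s.
Proof.
  transitivity (d1 2%nat s * (d1 1%nat s ^ 2 + d2 1%nat s ^ 2)
                - d1 1%nat s * (d1 1%nat s * d1 2%nat s + d2 1%nat s * d2 2%nat s)).
  - rewrite curve_unit_speed, tangent_orthogonal; ring.
  - unfold kappa, nu1, nu2; ring.
Qed.

Lemma frenet2 s : d2 2%nat s = kappa d1 d2 s * nu2 d1 d2 s.
Proof.
  transitivity (d2 2%nat s * (d1 1%nat s ^ 2 + d2 1%nat s ^ 2)
                - d2 1%nat s * (d1 1%nat s * d1 2%nat s + d2 1%nat s * d2 2%nat s)).
  - rewrite curve_unit_speed, tangent_orthogonal; ring.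
  - unfold kappa, nu1, nu2; ring.
Qed.

Definition twisted_tangent1 (b s : R) : R := d1 1%nat s + b * d2 0%nat s.
Definition twisted_tangent2 (b s : R) : R := d2 1%nat s - b * d1 0%nat s.

Lemma twisted_tangent1_is_derive b (x : R) :
  is_derive (twisted_tangent1 b) x ((kappa d1 d2 x - b) * nu1 d1 d2 x).
Proof.
  unfold twisted_tangent1; auto_derive; [repeat split; auto |].
  rewrite Derive_d1, Derive_d2, frenet1; unfold nu1; ring.
Qed.

Lemma twisted_tangent2_is_derive b (x : R) :
  is_derive (twisted_tangent2 b) x ((kappa d1 d2 x - b) * nu2 d1 d2 x).
Proof.
  unfold twisted_tangent2; auto_derive; [repeat split; auto |].
  rewrite Derive_d1, Derive_d2, frenet2; unfold nu2; ring.
Qed.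

Lemma twisted_tangent1_periodic b s : twisted_tangent1 b (s + L) = twisted_tangent1 b s.
Proof. unfold twisted_tangent1; rewrite !curve_periodic1, !curve_periodic2; reflexivity. Qed.

Lemma twisted_tangent2_periodic b s : twisted_tangent2 b (s + L) = twisted_tangent2 b s.
Proof. unfold twisted_tangent2; rewrite !curve_periodic1, !curve_periodic2; reflexivity. Qed.

Lemma twisted_tangent_energy b :
  RInt (fun s => ((kappa d1 d2 s - b) * nu1 d1 d2 s) ^ 2
                 + ((kappa d1 d2 s - b) * nu2 d1 d2 s) ^ 2) 0 L
  = Rint (fun s => (kappa d1 d2 s - b) ^ 2) 0 L.
Proof.
  rewrite Rint_RInt by smooth_continuous.
  apply RInt_ext_R; intro s.
  transitivity ((kappa d1 d2 s - b) ^ 2 * (d1 1%nat s ^ 2 + d2 1%nat s ^ 2)).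
  - unfold nu1, nu2; ring.
  - rewrite curve_unit_speed; ring.
Qed.

Lemma position_tangent_is_derive (x : R) :
  is_derive (fun s => d1 0%nat s * d1 1%nat s + d2 0%nat s * d2 1%nat s) x
    (1 + kappa d1 d2 x * (d1 0%nat x * nu1 d1 d2 x + d2 0%nat x * nu2 d1 d2 x)).
Proof.
  auto_derive; [repeat split; auto |].
  rewrite !Derive_d1, !Derive_d2, frenet1, frenet2.
  transitivity (d1 1%nat x ^ 2 + d2 1%nat x ^ 2
                + kappa d1 d2 x * (d1 0%nat x * nu1 d1 d2 x + d2 0%nat x * nu2 d1 d2 x));
    [ring | rewrite curve_unit_speed; reflexivity].
Qed.

Lemma twisted_tangent_cross b :
  RInt (fun s => (kappa d1 d2 s - b) * nu1 d1 d2 s * twisted_tangent2 b s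
                 - (kappa d1 d2 s - b) * nu2 d1 d2 s * twisted_tangent1 b s) 0 L
  = 2 * b * L - Rint (kappa d1 d2) 0 L - 2 * b ^ 2 * area L d1 d2 :> R.
Proof.
  set (fnu := fun s => d1 0%nat s * nu1 d1 d2 s + d2 0%nat s * nu2 d1 d2 s).
  rewrite (RInt_ext_R _ (fun s => 2 * b - kappa d1 d2 s - b * (1 + kappa d1 d2 s * fnu s)
                                  + b ^ 2 * fnu s)).
  2: { intro s; apply Rminus_diag_uniq; unfold fnu.
       transitivity ((kappa d1 d2 s - b) * (1 - (d1 1%nat s ^ 2 + d2 1%nat s ^ 2))).
       - unfold twisted_tangent1, twisted_tangent2, nu1, nu2; ring.
       - rewrite curve_unit_speed; ring. }
  unfold fnu, area; rewrite !Rint_RInt by smooth_continuous.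
  rewrite RInt_plus_R, !RInt_minus_R, !RInt_scal_R by smooth_continuous.
  rewrite (RInt_is_derive _ _ 0 L position_tangent_is_derive) by smooth_continuous.
  rewrite RInt_const, !curve_closed1, !curve_closed2.
  change (scal (L - 0) b) with ((L - 0) * b); field.
Qed.

Lemma curve_Wirtinger b :
  Rabs (2 * b * L - Rint (kappa d1 d2) 0 L - 2 * b ^ 2 * area L d1 d2)
  <= L / (2 * PI) * Rint (fun s => (kappa d1 d2 s - b) ^ 2) 0 L.
Proof.
  rewrite <- twisted_tangent_cross, <- twisted_tangent_energy.
  apply Wirtinger_area; [exact curve_length_pos | | smooth_continuous | | smooth_continuous | |].
  - apply twisted_tangent1_is_derive.
  - apply twisted_tangent2_is_derive.
  - apply twisted_tangent1_periodic.
  - apply twisted_tangent2_periodic.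
Qed.

End ArclengthCurve.

Theorem mainTheorem5 (L : R) (d1 d2 : nat -> R -> R) :
  arclength_closed_curve L d1 d2 ->
  1 <= rot_number L d1 d2 ->
  4 * PI ^ 2 * rot_number L d1 d2 * Rabs (Im1 L d1 d2) <= I0 L d1 d2.
Proof.
  intros curve Hn.
  assert (HL := curve_length_pos L d1 d2 curve).
  assert (Hpi := PI_RGT_0).
  unfold I0, Im1, kappa_tilde; unfold rot_number in *.
  set (K := Rint (kappa d1 d2) 0 L) in *.
  assert (HK : 0 < K) by (apply (Rmult_lt_reg_l (/ (2 * PI))); [apply Rinv_0_lt_compat |]; lra).
  assert (HW := curve_Wirtinger L d1 d2 curve (/ L * K)); fold K in HW.
  set (Q := Rint (fun s => (kappa d1 d2 s - / L * K) ^ 2) 0 L) in *.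
  replace (2 * (/ L * K) * L - K - 2 * (/ L * K) ^ 2 * area L d1 d2)
    with (K * (1 - 4 * (/ (2 * PI) * K) * PI * area L d1 d2 / L ^ 2)) in HW by (field; lra).
  rewrite Rabs_mult, (Rabs_pos_eq K) in HW by lra.
  replace (4 * PI ^ 2 * (/ (2 * PI) * K)) with (2 * PI * K) by (field; lra).
  replace (L * Q) with (2 * PI * (L / (2 * PI) * Q)) by (field; lra).
  rewrite Rmult_assoc; apply Rmult_le_compat_l; lra.
Qed.
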